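(* Let $\lambda\geqslant\omega$ be a cardinal and $n$ a positive integer, and let $\mathscr{I}_\lambda^n$ carry any Hausdorff topology making it a topological semigroup. Let $S$ be a topological semigroup such that $S\times S$ is countably compact. Then every continuous homomorphism $h\colon\mathscr{I}_\lambda^n\to S$ is annihilating, i.e. $(s)h=(t)h$ for all $s,t\in\mathscr{I}_\lambda^n$.
   Context: A topological semigroup is a Hausdorff space with a continuous associative multiplication. For a set $X$ of cardinality $\lambda$, $\mathscr{I}(X)$ is the semigroup of all partial one-to-one maps of $X$ (including the empty map) under composition $x(\alpha\beta)=(x\alpha)\beta$ on $\operatorname{dom}(\alpha\beta)=\{y\in\operatorname{dom}\alpha: y\alpha\in\operatorname{dom}\beta\}$; the rank of $\alpha$ is $|\operatorname{ran}\alpha|$, and $\mathscr{I}_\lambda^n=\{\alpha\in\mathscr{I}(X):\operatorname{rank}\alpha\leqslant n\}$. A homomorphism is annihilating if it is constant. $\omega$ is the first infinite cardinal. *)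

From Stdlib Require Import List Arith Lia.
Set Implicit Arguments.

Definition is_topology {T : Type} (op : (T -> Prop) -> Prop) : Prop :=
  op (fun _ => True) /\
  (forall U V, op U -> op V -> op (fun x => U x /\ V x)) /\
  (forall F : (T -> Prop) -> Prop,
      (forall U, F U -> op U) -> op (fun x => exists U, F U /\ U x)).

Definition hausdorff {T : Type} (op : (T -> Prop) -> Prop) : Prop :=
  forall x y : T, x <> y ->
    exists U V, op U /\ op V /\ U x /\ V y /\ (forall z, ~ (U z /\ V z)).

Definition prod_top {A B : Type} (opA : (A -> Prop) -> Prop)
  (opB : (B -> Prop) -> Prop) : (A * B -> Prop) -> Prop :=
  fun W => forall p, W p ->
    exists U V, opA U /\ opB V /\ U (fst p) /\ V (snd p) /\
      (forall a b, U a -> V b -> W (a, b)).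

Definition continuous {A B : Type} (opA : (A -> Prop) -> Prop)
  (opB : (B -> Prop) -> Prop) (f : A -> B) : Prop :=
  forall V, opB V -> opA (fun x => V (f x)).

Definition countably_compact {T : Type} (op : (T -> Prop) -> Prop) : Prop :=
  forall U : nat -> T -> Prop,
    (forall k, op (U k)) -> (forall x, exists k, U k x) ->
    exists N, forall x, exists k, k <= N /\ U k x.

Definition topological_semigroup {T : Type} (mul : T -> T -> T)
  (op : (T -> Prop) -> Prop) : Prop :=
  is_topology op /\ hausdorff op /\
  (forall x y z, mul x (mul y z) = mul (mul x y) z) /\
  continuous (prod_top op op) op (fun p => mul (fst p) (snd p)).

(* Partial one-to-one maps of X: x is in the domain iff pmap x = Some _. *)
Record pinj (X : Type) := Pinj {
  pmap : X -> option X;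
  pmap_inj : forall x y z, pmap x = Some z -> pmap y = Some z -> x = y
}.

Definition rank_le {X : Type} (a : pinj X) (n : nat) : Prop :=
  exists l : list X, length l <= n /\
    (forall x y, pmap a x = Some y -> In y l).

(* I_lambda^n where lambda = |X|. *)
Definition In_n (X : Type) (n : nat) := { a : pinj X | rank_le a n }.

Definition comp_map {X : Type} (a b : X -> option X) : X -> option X :=
  fun x => match a x with Some y => b y | None => None end.

Lemma comp_map_inj {X : Type} (a b : pinj X) :
  forall x y z, comp_map (pmap a) (pmap b) x = Some z ->
                comp_map (pmap a) (pmap b) y = Some z -> x = y.
Proof.
  intros x y z; unfold comp_map.
  destruct (pmap a x) as [u|] eqn:Hu; [|discriminate].
  destruct (pmap a y) as [v|] eqn:Hv; [|discriminate].
  intros H1 H2.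
  assert (u = v) by (eapply (pmap_inj b); eauto). subst v.
  eapply (pmap_inj a); eauto.
Qed.

Definition pcomp {X : Type} (a b : pinj X) : pinj X :=
  @Pinj X (comp_map (pmap a) (pmap b)) (comp_map_inj a b).

Lemma pcomp_rank {X : Type} (n : nat) (a b : pinj X) :
  rank_le b n -> rank_le (pcomp a b) n.
Proof.
  intros [l [Hl Hin]]. exists l; split; auto.
  intros x y; simpl; unfold comp_map.
  destruct (pmap a x) as [u|]; [|discriminate]. apply Hin.
Qed.

(* Composition (x)(alpha beta) = ((x)alpha)beta in I_lambda^n. *)
Definition In_mul {X : Type} {n : nat} (s t : In_n X n) : In_n X n :=
  exist _ (pcomp (proj1_sig s) (proj1_sig t))
        (pcomp_rank (proj1_sig s) (proj2_sig t)).

(* Every s in I_lambda^n factors as s = a_k b_k for infinitely many k, with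
   a_k b_j = 0 whenever j <> k: a_k moves the (finite) range of s into the k-th
   of countably many pairwise disjoint copies inside X, and b_k moves that copy
   back.  By countable compactness the sequence (h a_k, h b_k) has a cluster
   point (p, q) in S x S.  Continuity of the multiplication of S gives
   p q = h s, and also p (h b_j) = h 0 for every j, hence p q = h 0.  So h is
   constant with value h 0. *)

From Stdlib Require Import List Arith Lia Cantor.
From Stdlib Require Import Classical ClassicalEpsilon FunctionalExtensionality ProofIrrelevance.

Lemma hausdorff_eq_of_nbhds {T : Type} (op : (T -> Prop) -> Prop) (x y : T) :
  hausdorff op -> (forall W, op W -> W x -> W y) -> x = y.
Proof.
  intros Hhaus Hnbhd. apply NNPP; intro Hxy.
  destruct (Hhaus x y Hxy) as [U [V [HU [_ [Ux [Vy Hdisj]]]]]].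
  apply (Hdisj y); split; [apply Hnbhd|]; auto.
Qed.

Lemma prod_top_is_topology {A B : Type} (opA : (A -> Prop) -> Prop)
  (opB : (B -> Prop) -> Prop) :
  is_topology opA -> is_topology opB -> is_topology (prod_top opA opB).
Proof.
  intros [HA_full [HA_inter _]] [HB_full [HB_inter _]]. split; [|split].
  - intros p _. exists (fun _ => True), (fun _ => True). repeat split; auto.
  - intros W W' HW HW' p [Wp W'p].
    destruct (HW p Wp) as [U [V [HU [HV [Up [Vp Hbox]]]]]].
    destruct (HW' p W'p) as [U' [V' [HU' [HV' [U'p [V'p Hbox']]]]]].
    exists (fun a => U a /\ U' a), (fun b => V b /\ V' b).
    split; [auto|split; [auto|split; [auto|split; [auto|]]]].
    intros a b [Ua U'a] [Vb V'b]. split; auto.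
  - intros F HF p [W [FW Wp]].
    destruct (HF W FW p Wp) as [U [V [HU [HV [Up [Vp Hbox]]]]]].
    exists U, V. repeat split; auto. intros a b Ua Vb. exists W; auto.
Qed.

Lemma prod_top_fst_open {A B : Type} (opA : (A -> Prop) -> Prop)
  (opB : (B -> Prop) -> Prop) (U : A -> Prop) :
  opB (fun _ => True) -> opA U -> prod_top opA opB (fun p => U (fst p)).
Proof. intros HB HU p Up. exists U, (fun _ => True). repeat split; auto. Qed.

Lemma prod_top_snd_open {A B : Type} (opA : (A -> Prop) -> Prop)
  (opB : (B -> Prop) -> Prop) (V : B -> Prop) :
  opA (fun _ => True) -> opB V -> prod_top opA opB (fun p => V (snd p)).
Proof. intros HA HV p Vp. exists (fun _ => True), V. repeat split; auto. Qed.

Lemma countably_compact_cluster {T : Type} (op : (T -> Prop) -> Prop) :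
  is_topology op -> countably_compact op -> forall u : nat -> T,
  exists p, forall W, op W -> W p -> forall m, exists k, m <= k /\ W (u k).
Proof.
  intros [_ [_ Hunion]] Hcc u. apply NNPP; intro Hnone.
  (* Otherwise the open sets U m below cover T, yet no finite subfamily
     contains u N. *)
  set (U := fun m p =>
    exists W, (op W /\ forall k, m <= k -> ~ W (u k)) /\ W p).
  destruct (Hcc U) as [N HN].
  - intro m. apply Hunion. tauto.
  - intro p. apply NNPP; intro Hp. apply Hnone. exists p.
    intros W HW Wp m. apply NNPP; intro Hm. apply Hp. exists m, W.
    repeat split; auto. intros k Hk Wk. apply Hm. exists k; auto.
  - destruct (HN (u N)) as [k [Hk [W [[_ Hfar] Wu]]]].
    exact (Hfar N Hk Wu).
Qed.

Lemma orthogonal_products_eq {T : Type} {mulT : T -> T -> T}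
  {tauT : (T -> Prop) -> Prop} :
  topological_semigroup mulT tauT -> countably_compact (prod_top tauT tauT) ->
  forall (A B : nat -> T) (s z : T),
  (forall k, mulT (A k) (B k) = s) ->
  (forall j k, j <> k -> mulT (A k) (B j) = z) -> s = z.
Proof.
  intros HT HTT A B s z Hdiag Hoff.
  destruct HT as [Htop [Hhaus [_ Hmul]]].
  pose proof Htop as [Hfull _].
  destruct (countably_compact_cluster _ (prod_top_is_topology _ _ Htop Htop) HTT
              (fun k => (A k, B k))) as [[p q] Hcluster].
  assert (Hpq_s : mulT p q = s).
  { apply (hausdorff_eq_of_nbhds tauT); auto. intros W HW Wpq.
    destruct (Hcluster _ (Hmul W HW) Wpq 0) as [k [_ Wk]]. simpl in Wk.
    rewrite Hdiag in Wk; exact Wk. }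
  assert (HpB : forall j, mulT p (B j) = z).
  { intro j. apply (hausdorff_eq_of_nbhds tauT); auto. intros W HW Wp.
    destruct (Hmul W HW (p, B j) Wp) as [U [V [HU [HV [Up [VB Hbox]]]]]].
    destruct (Hcluster _ (prod_top_fst_open tauT tauT U Hfull HU) Up (S j))
      as [k [Hk Uk]].
    pose proof (Hbox _ _ Uk VB) as Wk. simpl in Wk.
    rewrite Hoff in Wk; [exact Wk | lia]. }
  assert (Hpq_z : mulT p q = z).
  { apply (hausdorff_eq_of_nbhds tauT); auto. intros W HW Wpq.
    destruct (Hmul W HW (p, q) Wpq) as [U [V [HU [HV [Up [Vq Hbox]]]]]].
    destruct (Hcluster _ (prod_top_snd_open tauT tauT V Hfull HV) Vq 0)
      as [k [_ Vk]].
    pose proof (Hbox _ _ Up Vk) as Wk. simpl in Wk.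
    rewrite HpB in Wk; exact Wk. }
  congruence.
Qed.

Lemma In_n_ext {X : Type} {n : nat} (s t : In_n X n) :
  (forall x, pmap (proj1_sig s) x = pmap (proj1_sig t) x) -> s = t.
Proof.
  destruct s as [[ps Hps] Rs], t as [[pt Hpt] Rt]; simpl; intro Heq.
  assert (ps = pt) by (apply functional_extensionality; auto). subst pt.
  rewrite (proof_irrelevance _ Hps Hpt) in *.
  rewrite (proof_irrelevance _ Rs Rt). reflexivity.
Qed.

Definition pzero (X : Type) : pinj X :=
  @Pinj X (fun _ => None) (fun x y z (H : None = Some z) _ => match H with end).

Definition In_zero (X : Type) (n : nat) : In_n X n.
Proof.
  exists (pzero X), nil. split; [simpl; lia | discriminate].
Defined.

Section Splitting.

Variables (X : Type) (f : nat -> X).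
Hypothesis f_inj : forall i j, f i = f j -> i = j.
Variables (n : nat) (l : list X).
Hypothesis l_length : length l <= n.

Definition list_index (y : X) : nat :=
  epsilon (inhabits 0) (fun i => nth_error l i = Some y).

Lemma nth_error_list_index (y : X) :
  In y l -> nth_error l (list_index y) = Some y.
Proof. intro Hy. unfold list_index. apply epsilon_spec, In_nth_error, Hy. Qed.

(* The k-th of countably many disjoint copies of l inside X. *)
Definition tag (k : nat) (y : X) : X := f (to_nat (k, list_index y)).

Lemma tag_inj (k j : nat) (y y' : X) :
  In y l -> In y' l -> tag k y = tag j y' -> k = j /\ y = y'.
Proof.
  intros Hy Hy' Heq. apply f_inj, (f_equal of_nat) in Heq.
  rewrite !cancel_of_to in Heq. injection Heq as Hkj Hidx.
  split; [exact Hkj|].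
  apply nth_error_list_index in Hy. apply nth_error_list_index in Hy'.
  congruence.
Qed.

Definition tag_map (k : nat) (x : X) : option X :=
  if excluded_middle_informative (In x l) then Some (tag k x) else None.

Lemma tag_map_inj (k : nat) :
  forall x y z, tag_map k x = Some z -> tag_map k y = Some z -> x = y.
Proof.
  unfold tag_map; intros x y z.
  destruct (excluded_middle_informative (In x l)) as [Hx|]; [|discriminate].
  destruct (excluded_middle_informative (In y l)) as [Hy|]; [|discriminate].
  intros Hxz Hyz. injection Hxz as <-. injection Hyz as Heq.
  symmetry in Heq. apply (tag_inj k k x y Hx Hy Heq).
Qed.

Definition untag_map (k : nat) (w : X) : option X :=
  match excluded_middle_informative (exists y, In y l /\ tag k y = w) with
  | left H => Some (proj1_sig (constructive_indefinite_description _ H))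
  | right _ => None
  end.

Lemma untag_map_spec (k : nat) (w y : X) :
  untag_map k w = Some y -> In y l /\ tag k y = w.
Proof.
  unfold untag_map. destruct (excluded_middle_informative _) as [H|]; [|discriminate].
  destruct (constructive_indefinite_description _ H) as [y' Hy']; simpl.
  intro Heq; injection Heq as <-; exact Hy'.
Qed.

Lemma untag_map_inj (k : nat) :
  forall x y z, untag_map k x = Some z -> untag_map k y = Some z -> x = y.
Proof.
  intros x y z Hx Hy.
  apply untag_map_spec in Hx as [_ <-]. apply untag_map_spec in Hy as [_ <-].
  reflexivity.
Qed.

Lemma untag_map_tag (j k : nat) (y : X) : In y l ->
  untag_map j (tag k y) = if Nat.eq_dec j k then Some y else None.
Proof.
  intro Hy. destruct (untag_map j (tag k y)) as [y'|] eqn:Hut.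
  - apply untag_map_spec in Hut as [Hy' Heq].
    destruct (tag_inj j k y' y Hy' Hy Heq) as [-> ->].
    destruct (Nat.eq_dec k k); congruence.
  - destruct (Nat.eq_dec j k) as [->|]; [|reflexivity].
    unfold untag_map in Hut.
    destruct (excluded_middle_informative _) as [|Hnone]; [discriminate|].
    exfalso; apply Hnone; exists y; auto.
Qed.

Definition tag_In (k : nat) : In_n X n.
Proof.
  exists (Pinj (tag_map k) (tag_map_inj k)), (map (tag k) l).
  rewrite length_map. split; [exact l_length|].
  simpl; unfold tag_map; intros x y.
  destruct (excluded_middle_informative (In x l)); [|discriminate].
  intro Hxy; injection Hxy as <-. apply in_map; assumption.
Defined.

Definition untag_In (k : nat) : In_n X n.
Proof.
  exists (Pinj (untag_map k) (untag_map_inj k)), l.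
  split; [exact l_length|].
  intros w y Hwy. apply (untag_map_spec k w y Hwy).
Defined.

Lemma In_mul_tag_untag (s : In_n X n) (j k : nat) :
  (forall x y, pmap (proj1_sig s) x = Some y -> In y l) ->
  In_mul (In_mul s (tag_In k)) (untag_In j) =
  if Nat.eq_dec j k then s else In_zero X n.
Proof.
  intro Hrange. apply In_n_ext; intro x.
  destruct (pmap (proj1_sig s) x) as [y|] eqn:Hsx.
  - simpl; unfold comp_map, tag_map. rewrite Hsx.
    destruct (excluded_middle_informative (In y l)) as [Hy|Hy];
      [|exfalso; exact (Hy (Hrange x y Hsx))].
    rewrite (untag_map_tag j k y Hy).
    destruct (Nat.eq_dec j k); simpl; [symmetry; exact Hsx | reflexivity].
  - simpl; unfold comp_map. rewrite Hsx.
    destruct (Nat.eq_dec j k); simpl; [symmetry; exact Hsx | reflexivity].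
Qed.

End Splitting.

Lemma In_n_orthogonal_factorization (X : Type) (f : nat -> X)
  (f_inj : forall i j, f i = f j -> i = j) (n : nat) (s : In_n X n) :
  exists a b : nat -> In_n X n,
    (forall k, In_mul (a k) (b k) = s) /\
    (forall j k, j <> k -> In_mul (a k) (b j) = In_zero X n).
Proof.
  destruct (proj2_sig s) as [l [Hl Hrange]].
  exists (fun k => In_mul s (tag_In X f f_inj n l Hl k)), (untag_In X f n l Hl).
  split.
  - intro k. rewrite (In_mul_tag_untag X f f_inj n l Hl s k k Hrange).
    destruct (Nat.eq_dec k k); congruence.
  - intros j k Hjk. rewrite (In_mul_tag_untag X f f_inj n l Hl s j k Hrange).
    destruct (Nat.eq_dec j k); congruence.
Qed.

Theorem theorem8
  (X : Type)
  (HX : exists f : nat -> X, forall i j, f i = f j -> i = j)  (* |X| = lambda >= omega *)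
  (n : nat) (Hn : 0 < n)
  (tau : (In_n X n -> Prop) -> Prop)
  (Htau : topological_semigroup (@In_mul X n) tau)
  (S : Type) (mulS : S -> S -> S) (tauS : (S -> Prop) -> Prop)
  (HS : topological_semigroup mulS tauS)
  (HSS : countably_compact (prod_top tauS tauS))
  (h : In_n X n -> S)
  (hhom : forall s t, h (In_mul s t) = mulS (h s) (h t))
  (hcont : continuous tau tauS h) :
  forall s t : In_n X n, h s = h t.
Proof.
  destruct HX as [f f_inj].
  assert (Hconst : forall s, h s = h (In_zero X n)).
  { intro s.
    destruct (In_n_orthogonal_factorization X f f_inj n s) as [a [b [Hdiag Hoff]]].
    apply (orthogonal_products_eq HS HSS (fun k => h (a k)) (fun k => h (b k))).
    - intro k. rewrite <- hhom, Hdiag; reflexivity.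
    - intros j k Hjk. rewrite <- hhom, Hoff; auto. }
  intros s t. rewrite (Hconst s), (Hconst t); reflexivity.
Qed.
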